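(* Let $n$ be a positive integer, let $s_1,s_2,s_3>0$, and let $z\in\mathbb{R}$ (in the application $z=x_1-2x_2+x_3$ for observed cell means $x_1,x_2,x_3$). For $\rho=(\rho_1,\rho_2,\rho_3)$ put $$s^2(\rho_1,\rho_2,\rho_3)=s_1^2+4s_2^2+s_3^2-4s_1s_2\rho_3+2s_1s_3\rho_2-4s_2s_3\rho_1,$$ $s(\rho_1,\rho_2,\rho_3)=\sqrt{s^2(\rho_1,\rho_2,\rho_3)}$, and $$f_n(z;\rho_1,\rho_2,\rho_3)=\sqrt{\frac{n}{2\pi}}\,\frac{1}{s(\rho_1,\rho_2,\rho_3)}\exp\Big(-\frac{nz^2}{2s^2(\rho_1,\rho_2,\rho_3)}\Big).$$ Let $$R=\big\{(\rho_1,\rho_2,\rho_3): -1<\rho_i<1\ (i=1,2,3),\ 1-\rho_1^2-\rho_2^2-\rho_3^2+2\rho_1\rho_2\rho_3>0,\ s(\rho_1,\rho_2,\rho_3)\le s(0,0,0)\big\},$$ and define the evidential value $$\mathbb V=\frac{\sup_{(\rho_1,\rho_2,\rho_3)\in R} f_n(z;\rho_1,\rho_2,\rho_3)}{f_n(z;0,0,0)}.$$ Define $s_L^2=\inf_{(\rho_1,\rho_2,\rho_3)\in R}s^2(\rho_1,\rho_2,\rho_3)$, $\tilde s_L^2=\min\{(2s_2-(s_1+s_3))^2,\ (2s_2-\sqrt{s_1^2+s_3^2})^2\}$ with $\tilde s_L\ge 0$, and $s_0^2=s^2(0,0,0)=s_1^2+4s_2^2+s_3^2$ with $s_0>0$.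 Then $s_L^2\le \tilde s_L^2\le s_0^2$. Moreover: (i) if $\tilde s_L^2\le nz^2\le s_0^2$, then $$\mathbb V=\frac{s_0}{\sqrt{nz^2}}\exp\Big\{-\frac12 nz^2\Big[\frac1{nz^2}-\frac1{s_0^2}\Big]\Big\}\ge 1;$$ (ii) if $nz^2\le \tilde s_L^2$, then $$\mathbb V\ge \frac{s_0}{\tilde s_L}\exp\Big\{-\frac12 nz^2\Big[\frac1{\tilde s_L^2}-\frac1{s_0^2}\Big]\Big\}\ge 1,$$ and $\mathbb V$ is at most $\frac{s_0}{\sqrt{nz^2}}\exp\{-\frac12 nz^2[\frac1{nz^2}-\frac1{s_0^2}]\}$; (iii) if $s_0^2\le nz^2$, then $\mathbb V=1$.
   Context: Statistical setting (for motivation): $\sqrt n\,(X_1-2X_2+X_3)$ is modeled as normal with mean $0$ and variance $\sigma_1^2+4\sigma_2^2+\sigma_3^2-4\sigma_1\sigma_2\rho_3+2\sigma_1\sigma_3\rho_2-4\sigma_2\sigma_3\rho_1$, where $X_i$ are three cell means of $n$ observations each, $\sigma_i^2$ the cell variances and $\rho_1,\rho_2,\rho_3$ correlations between cell means; $f_n$ is this normal density of $Z=X_1-2X_2+X_3$ evaluated at $z$ with $\sigma_i$ replaced by the sample standard deviations $s_i$. The set $R$ is the set of admissible correlation parameters under the ''fabrication'' hypothesis, and $(0,0,0)$ corresponds to the independence hypothesis. *)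

From HB Require Import structures.
From mathcomp Require Import all_boot all_order all_algebra.
From mathcomp Require Import all_classical all_reals all_analysis.
Set Implicit Arguments. Unset Strict Implicit. Unset Printing Implicit Defensive.
Import Order.TTheory GRing.Theory Num.Theory.
Local Open Scope classical_set_scope.
Local Open Scope ring_scope.

Definition rho1 {R : realType} (r : R * R * R) : R := r.1.1.
Definition rho2 {R : realType} (r : R * R * R) : R := r.1.2.
Definition rho3 {R : realType} (r : R * R * R) : R := r.2.

Definition ssq {R : realType} (s1 s2 s3 : R) (r : R * R * R) : R :=
  s1 ^+ 2 + 4 * s2 ^+ 2 + s3 ^+ 2 - 4 * s1 * s2 * rho3 r
  + 2 * s1 * s3 * rho2 r - 4 * s2 * s3 * rho1 r.

Definition sfun {R : realType} (s1 s2 s3 : R) (r : R * R * R) : R :=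
  Num.sqrt (ssq s1 s2 s3 r).

Definition fn {R : realType} (n : nat) (s1 s2 s3 z : R) (r : R * R * R) : R :=
  Num.sqrt (n%:R / (2 * pi)) * (sfun s1 s2 s3 r)^-1
  * expR (- (n%:R * z ^+ 2) / (2 * ssq s1 s2 s3 r)).

Definition Rset {R : realType} (s1 s2 s3 : R) : set (R * R * R) :=
  [set r | [/\ -1 < rho1 r < 1, -1 < rho2 r < 1, -1 < rho3 r < 1,
     0 < 1 - rho1 r ^+ 2 - rho2 r ^+ 2 - rho3 r ^+ 2 + 2 * rho1 r * rho2 r * rho3 r
     & sfun s1 s2 s3 r <= sfun s1 s2 s3 (0, 0, 0)]].

(* evidential value V = sup_{rho in R} f_n(z;rho) / f_n(z;0,0,0), as an extended real
   (the supremum may be +oo) *)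
Definition evV {R : realType} (n : nat) (s1 s2 s3 z : R) : \bar R :=
  (ereal_sup [set (fn n s1 s2 s3 z r)%:E | r in Rset s1 s2 s3]
   * ((fn n s1 s2 s3 z (0, 0, 0))^-1)%:E)%E.

Definition sL2 {R : realType} (s1 s2 s3 : R) : R :=
  inf [set ssq s1 s2 s3 r | r in Rset s1 s2 s3].

Definition tsL2 {R : realType} (s1 s2 s3 : R) : R :=
  Num.min ((2 * s2 - (s1 + s3)) ^+ 2) ((2 * s2 - Num.sqrt (s1 ^+ 2 + s3 ^+ 2)) ^+ 2).
Definition tsL {R : realType} (s1 s2 s3 : R) : R := Num.sqrt (tsL2 s1 s2 s3).

Definition s02 {R : realType} (s1 s2 s3 : R) : R := ssq s1 s2 s3 (0, 0, 0).
Definition s0 {R : realType} (s1 s2 s3 : R) : R := Num.sqrt (s02 s1 s2 s3).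

(* a / b as an extended real, with the convention a / 0 = +oo (used for a > 0, b >= 0) *)
Definition ediv {R : realType} (a b : R) : \bar R :=
  if b == 0 then +oo%E else (a / b)%:E.

From HB Require Import structures.
From mathcomp Require Import all_boot all_order all_algebra.
From mathcomp Require Import all_classical all_reals all_analysis.
From mathcomp Require Import lra ring.
Import Order.TTheory GRing.Theory Num.Theory.
Local Open Scope classical_set_scope.
Local Open Scope ring_scope.
Set Implicit Arguments. Unset Strict Implicit. Unset Printing Implicit Defensive.

(* Write a = n z^2 and g_a(t) = t^(-1/2) exp(-a/(2t)), so that f_n(z; rho) is a
   constant times g_a(s^2(rho)); g_a increases on (0, a] and decreases on [a, oo).
   On the two paths rho = (u, u, u) and rho = (u s3/q, 0, u s1/q), q^2 = s1^2 + s3^2,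
   s^2 falls linearly from s_0^2 (u = 0) towards the two candidates for tilde s_L^2
   (u -> 1), and these paths stay in R; so s^2 takes every value of
   (tilde s_L^2, s_0^2] on R.  The supremum of g_a over these values is g_a(a) when a
   lies in the interval, at least g_a(tilde s_L^2) when a is below it, and g_a(s_0^2)
   when a is above it; dividing by g_a(s_0^2) gives (i)-(iii). *)

Definition gauss_lik {R : realType} (a t : R) : R :=
  (Num.sqrt t)^-1 * expR (- a / (2 * t)).

Section GaussLikelihood.
Variable R : realType.
Implicit Types a c t x y : R.

Lemma mul_expRN_antitone a x y : 0 < x -> x <= y -> 1 <= a * x ->
  y * expR (- (a * y)) <= x * expR (- (a * x)).
Proof.
move=> x_gt0 xy ax_ge1.
have -> : expR (- (a * y)) = expR (- (a * x)) / expR (a * (y - x)).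
  by rewrite -expRN -expRD; congr expR; ring.
have ex_gt0 := expR_gt0 (- (a * x)); have ey_gt0 := expR_gt0 (a * (y - x)).
have : y <= x * expR (a * (y - x)) by have := expR_ge1Dx (a * (y - x)); nra.
rewrite mulrA ler_pdivrMr // => h.
by rewrite mulrAC ler_pM2r.
Qed.

Lemma mul_expRN_monotone a x y : 0 < x -> x <= y -> a * y <= 1 ->
  x * expR (- (a * x)) <= y * expR (- (a * y)).
Proof.
move=> x_gt0 xy ay_le1.
have -> : expR (- (a * y)) = expR (- (a * x)) * expR (- (a * (y - x))).
  by rewrite -expRD; congr expR; ring.
have ex_gt0 := expR_gt0 (- (a * x)).
have : x <= y * expR (- (a * (y - x))) by have := expR_ge1Dx (- (a * (y - x))); nra.
by nra.
Qed.

Lemma gauss_lik_ge0 a t : 0 <= gauss_lik a t.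
Proof. by rewrite mulr_ge0 ?invr_ge0 ?sqrtr_ge0 ?expR_ge0. Qed.

Lemma gauss_lik_gt0 a t : 0 < t -> 0 < gauss_lik a t.
Proof. by move=> t_gt0; rewrite mulr_gt0 ?invr_gt0 ?sqrtr_gt0 ?expR_gt0. Qed.

Lemma gauss_lik_le0 a t : t <= 0 -> gauss_lik a t = 0.
Proof. by move=> t_le0; rewrite /gauss_lik ler0_sqrtr // invr0 mul0r. Qed.

Lemma sqr_gauss_lik a t : 0 < t ->
  gauss_lik a t ^+ 2 = t^-1 * expR (- (a * t^-1)).
Proof.
move=> t_gt0; rewrite exprMn exprVn sqr_sqrtr ?ltW // -expRM_natl.
by congr (_ * expR _); field; rewrite gt_eqF.
Qed.

(* Comparing squares turns [gauss_lik a] at [t] into [x e^(-a x)] at [x = 1/t]. *)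
Lemma gauss_lik_le a t1 t2 : 0 < t1 -> 0 < t2 ->
  t1^-1 * expR (- (a * t1^-1)) <= t2^-1 * expR (- (a * t2^-1)) ->
  gauss_lik a t1 <= gauss_lik a t2.
Proof. by move=> ? ? h; rewrite -ler_sqr ?nnegrE ?gauss_lik_ge0 // !sqr_gauss_lik. Qed.

Lemma gauss_lik_monotone a t1 t2 : 0 < t1 -> t1 <= t2 -> t2 <= a ->
  gauss_lik a t1 <= gauss_lik a t2.
Proof.
move=> t1_gt0 t12 t2a; have t2_gt0 := lt_le_trans t1_gt0 t12.
apply: gauss_lik_le => //; apply: mul_expRN_antitone.
- by rewrite invr_gt0.
- by rewrite lef_pV2 ?posrE.
- by rewrite -[a * _]/(a / t2) ler_pdivlMr // mul1r.
Qed.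

Lemma gauss_lik_antitone a t1 t2 : 0 < t1 -> a <= t1 -> t1 <= t2 ->
  gauss_lik a t2 <= gauss_lik a t1.
Proof.
move=> t1_gt0 at1 t12; have t2_gt0 := lt_le_trans t1_gt0 t12.
apply: gauss_lik_le => //; apply: mul_expRN_monotone.
- by rewrite invr_gt0.
- by rewrite lef_pV2 ?posrE.
- by rewrite -[a * _]/(a / t1) ler_pdivrMr // mul1r.
Qed.

Lemma gauss_lik_le_max a t : 0 < a -> 0 < t -> gauss_lik a t <= gauss_lik a a.
Proof.
move=> a_gt0 t_gt0; have [t_le_a|/ltW a_le_t] := leP t a.
  exact: gauss_lik_monotone.
exact: gauss_lik_antitone.
Qed.

(* Going from [c] to [t], the factor [1/sqrt t] loses at most [c/t] (even squared)
   and the exponential factor only gains. *)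
Lemma gauss_lik_scaled_le a c t : 0 <= a -> 0 < c -> c <= t ->
  gauss_lik a c * (c / t) <= gauss_lik a t.
Proof.
move=> a_ge0 c_gt0 ct; have t_gt0 := lt_le_trans c_gt0 ct.
have ct_ge0 : 0 <= c / t by rewrite divr_ge0 // ltW.
have lhs_ge0 : 0 <= gauss_lik a c * (c / t) by rewrite mulr_ge0 ?gauss_lik_ge0.
rewrite -ler_sqr ?nnegrE ?gauss_lik_ge0 // exprMn !sqr_gauss_lik //.
have ct_le1 : c / t <= 1 by rewrite ler_pdivrMr // mul1r.
have ect := expR_gt0 (- (a * c^-1)).
have -> : c^-1 * expR (- (a * c^-1)) * (c / t) ^+ 2
    = t^-1 * ((c / t) * expR (- (a * c^-1))).
  by field; rewrite !gt_eqF.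
have tc : t^-1 <= c^-1 by rewrite lef_pV2 ?posrE.
rewrite ler_pM2l ?invr_gt0 //; apply: le_trans (_ : expR (- (a * c^-1)) <= _).
  by rewrite ger_pMl.
by rewrite ler_expR lerN2 ler_wpM2l.
Qed.

Lemma gauss_lik_ratio a c t : 0 < c -> 0 < t ->
  gauss_lik a c / gauss_lik a t
  = Num.sqrt t / Num.sqrt c * expR (- (1 / 2) * a * (c^-1 - t^-1)).
Proof.
move=> c_gt0 t_gt0.
have -> : - (1 / 2) * a * (c^-1 - t^-1) = - a / (2 * c) - (- a / (2 * t)).
  by field; rewrite !gt_eqF.
have := sqrtr_gt0 c; have := sqrtr_gt0 t; rewrite c_gt0 t_gt0 => sc st.
rewrite expRD expRN /gauss_lik.
by field; rewrite !gt_eqF ?expR_gt0.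
Qed.

End GaussLikelihood.

Lemma lee_of_scaled_lbound {R : realType} (M : \bar R) (L c b : R) :
  0 <= L -> 0 < c < b ->
  (forall t, c < t <= b -> ((L * (c / t))%:E <= M)%E) -> (L%:E <= M)%E.
Proof.
move=> L_ge0 /andP[c_gt0 cb] hM; apply/lee_mul01Pr; first by rewrite lee_fin.
move=> r /andP[r_gt0 r_lt1].
set r' := Num.max r (c / b).
have r'_gt0 : 0 < r' by rewrite lt_max r_gt0.
have r'_lt1 : r' < 1 by rewrite gt_max r_lt1 ltr_pdivrMr ?mul1r // (lt_trans c_gt0).
have cb_le : c / b <= r' by rewrite le_max lexx orbT.
apply: le_trans (hM (c / r') _).
  have -> : c / (c / r') = r' by field; rewrite !gt_eqF.
  by rewrite -EFinM lee_fin mulrC ler_wpM2l // le_max lexx.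
rewrite ltr_pdivlMr // gtr_pMr // r'_lt1 ler_pdivrMr //=.
by rewrite mulrC -ler_pdivrMr ?(lt_trans c_gt0).
Qed.

(* [r] gives the off-diagonal entries of a positive definite 3x3 correlation matrix
   (the last condition is its determinant). *)
Definition pd_corr {R : realType} (r : R * R * R) : Prop :=
  [/\ -1 < rho1 r < 1, -1 < rho2 r < 1, -1 < rho3 r < 1
    & 0 < 1 - rho1 r ^+ 2 - rho2 r ^+ 2 - rho3 r ^+ 2 + 2 * rho1 r * rho2 r * rho3 r].

Section Admissible.
Variables (R : realType) (s1 s2 s3 : R).
Hypotheses (s1_gt0 : 0 < s1) (s2_gt0 : 0 < s2) (s3_gt0 : 0 < s3).

Local Notation ssq := (ssq s1 s2 s3).
Local Notation S02 := (s02 s1 s2 s3).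
Local Notation Rset := (Rset s1 s2 s3).
Local Notation q := (Num.sqrt (s1 ^+ 2 + s3 ^+ 2)).
Implicit Types (m t u v w : R) (r : R * R * R).

Lemma s02E : S02 = s1 ^+ 2 + 4 * s2 ^+ 2 + s3 ^+ 2.
Proof. by rewrite /s02 /ssq /rho1 /rho2 /rho3 /= !mulr0 !subr0 addr0. Qed.

Lemma s02_gt0 : 0 < S02.
Proof. by rewrite s02E !addr_gt0 ?mulr_gt0 ?exprn_gt0. Qed.

Lemma Rset_pd_corr r : pd_corr r -> ssq r <= S02 -> Rset r.
Proof.
move=> [? ? ? ?] le_s02; split => //.
by rewrite /sfun ler_sqrt // (ltW s02_gt0).
Qed.

Lemma Rset0 : Rset (0, 0, 0).
Proof. by apply: Rset_pd_corr => //; rewrite /pd_corr /rho1 /rho2 /rho3 /=; split; lra. Qed.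

Lemma pd_corr_diag u : 0 <= u < 1 -> pd_corr (u, u, u).
Proof.
move=> /andP[u_ge0 u_lt1]; rewrite /pd_corr /rho1 /rho2 /rho3 /=.
have -> : 1 - u ^+ 2 - u ^+ 2 - u ^+ 2 + 2 * u * u * u = (1 - u) ^+ 2 * (1 + 2 * u) by ring.
by split; rewrite ?mulr_gt0 ?exprn_gt0; lra.
Qed.

Lemma pd_corr_tilt u v w : 0 <= u < 1 -> 0 <= v -> 0 <= w -> v ^+ 2 + w ^+ 2 = 1 ->
  pd_corr (u * v, 0, u * w).
Proof.
move=> /andP[u_ge0 u_lt1] v_ge0 w_ge0 vw1; rewrite /pd_corr /rho1 /rho2 /rho3 /=.
have -> : 1 - (u * v) ^+ 2 - 0 ^+ 2 - (u * w) ^+ 2 + 2 * (u * v) * 0 * (u * w)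
  = 1 - u ^+ 2 * (v ^+ 2 + w ^+ 2) by ring.
by rewrite vw1; split; nra.
Qed.

Lemma Rset_ssq_segment (m : R) (p : R -> R * R * R) :
  (forall u, 0 <= u < 1 -> pd_corr (p u) /\ ssq (p u) = S02 - u * (S02 - m)) ->
  forall t, m < t <= S02 -> exists2 r, Rset r & ssq r = t.
Proof.
move=> hp t /andP[mt tS]; set u := (S02 - t) / (S02 - m).
have K_gt0 : 0 < S02 - m by lra.
have u01 : 0 <= u < 1.
  by rewrite /u divr_ge0 ?(ltW K_gt0) ?subr_ge0 //= ltr_pdivrMr // mul1r; lra.
have [pd_pu ssq_pu] := hp u u01.
have ssq_t : ssq (p u) = t by rewrite ssq_pu /u divfK ?gt_eqF //; ring.
by exists (p u) => //; apply: Rset_pd_corr; rewrite // ssq_t.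
Qed.

Lemma ssq_diag u : ssq (u, u, u) = S02 - u * (S02 - (2 * s2 - (s1 + s3)) ^+ 2).
Proof. by rewrite s02E /ssq /rho1 /rho2 /rho3 /=; ring. Qed.

Lemma ssq_tilt u : ssq (u * (s3 / q), 0, u * (s1 / q)) = S02 - u * (S02 - (2 * s2 - q) ^+ 2).
Proof.
have q_gt0 : 0 < q by rewrite sqrtr_gt0 addr_gt0 ?exprn_gt0.
have q2 : q ^+ 2 = s1 ^+ 2 + s3 ^+ 2 by rewrite sqr_sqrtr // addr_ge0 ?sqr_ge0.
have K : s1 ^+ 2 + 4 * s2 ^+ 2 + s3 ^+ 2 - (2 * s2 - q) ^+ 2 = 4 * s2 * q.
  by transitivity (s1 ^+ 2 + s3 ^+ 2 - q ^+ 2 + 4 * s2 * q); [ring | rewrite q2 subrr add0r].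
have L : 4 * s1 * s2 * (u * (s1 / q)) + 4 * s2 * s3 * (u * (s3 / q)) = u * (4 * s2 * q).
  transitivity (4 * s2 * u * q ^+ 2 / q); last by field; rewrite gt_eqF.
  by rewrite q2; field; rewrite gt_eqF.
rewrite s02E K /ssq /rho1 /rho2 /rho3 /= -L; ring.
Qed.

Lemma Rset_ssq_attains t : tsL2 s1 s2 s3 < t <= S02 -> exists2 r, Rset r & ssq r = t.
Proof.
rewrite /tsL2 gt_min => /andP[/orP[] mt tS]; have ht := introT andP (conj mt tS).
  apply: (Rset_ssq_segment (p := fun u => (u, u, u)) _ ht).
  by move=> u u01; split; [exact: pd_corr_diag | exact: ssq_diag].
apply: (Rset_ssq_segment (p := fun u => (u * (s3 / q), 0, u * (s1 / q))) _ ht).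
move=> u u01; split; last exact: ssq_tilt.
have q_gt0 : 0 < q by rewrite sqrtr_gt0 addr_gt0 ?exprn_gt0.
apply: pd_corr_tilt => //; rewrite ?divr_ge0 ?(ltW q_gt0) ?(ltW s1_gt0) ?(ltW s3_gt0) //.
rewrite !expr_div_n -mulrDl addrC sqr_sqrtr ?addr_ge0 ?sqr_ge0 // divff //.
by rewrite gt_eqF // addr_gt0 ?exprn_gt0.
Qed.

Lemma tsL2_ge0 : 0 <= tsL2 s1 s2 s3.
Proof. by rewrite le_min !sqr_ge0. Qed.

Lemma tsL2_le_s02 : tsL2 s1 s2 s3 <= S02.
Proof.
have q_ge0 : 0 <= q := sqrtr_ge0 _.
have q2 : q ^+ 2 = s1 ^+ 2 + s3 ^+ 2 by rewrite sqr_sqrtr // addr_ge0 ?sqr_ge0.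
have := mulr_ge0 (ltW s2_gt0) q_ge0.
by rewrite ge_min s02E => sq_ge0; apply/orP; right; nra.
Qed.

Lemma ssq_lbound : has_lbound (ssq @` Rset).
Proof.
exists (S02 - 4 * s1 * s2 - 2 * s1 * s3 - 4 * s2 * s3).
move=> _ [r [/andP[? ?] /andP[? ?] /andP[? ?] _ _] <-].
have := mulr_gt0 s1_gt0 s2_gt0; have := mulr_gt0 s1_gt0 s3_gt0; have := mulr_gt0 s2_gt0 s3_gt0.
by rewrite s02E /ssq; nra.
Qed.

Lemma sL2_le_tsL2 : sL2 s1 s2 s3 <= tsL2 s1 s2 s3.
Proof.
apply/ler_addgt0Pr => e e_gt0; set y := Num.min S02 (tsL2 s1 s2 s3 + e).
have y_ssq : (ssq @` Rset) y.
  have [eS|/ltW Se] := leP (tsL2 s1 s2 s3 + e) S02.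
    have [r Rr ssq_r] : exists2 r, Rset r & ssq r = tsL2 s1 s2 s3 + e.
      by apply: Rset_ssq_attains; rewrite ltrDl e_gt0.
    by rewrite /y min_r // -ssq_r; exists r.
  by rewrite /y min_l //; exists (0, 0, 0); first exact: Rset0.
by apply: le_trans (ge_inf ssq_lbound y_ssq) _; rewrite ge_min lexx orbT.
Qed.

End Admissible.

(* The right-hand sides in (i) and (ii), at [c = n z^2] and [c = tilde s_L^2]. *)
Definition evbound {R : realType} (n : nat) (s1 s2 s3 z c : R) : \bar R :=
  (ediv (s0 s1 s2 s3) (Num.sqrt c)
   * (expR (- (1 / 2) * (n%:R * z ^+ 2) * (c^-1 - (s02 s1 s2 s3)^-1)))%:E)%E.

Section EvidentialValue.
Variables (R : realType) (n : nat) (s1 s2 s3 z : R).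
Hypotheses (n_gt0 : (0 < n)%N) (s1_gt0 : 0 < s1) (s2_gt0 : 0 < s2) (s3_gt0 : 0 < s3).

Local Notation a := (n%:R * z ^+ 2).
Local Notation C := (Num.sqrt (n%:R / (2 * pi)) : R).
Local Notation S02 := (s02 s1 s2 s3).
Local Notation T2 := (tsL2 s1 s2 s3).
Local Notation Sup := (ereal_sup [set (fn n s1 s2 s3 z r)%:E | r in Rset s1 s2 s3]).
Local Notation V := (evV n s1 s2 s3 z).
Local Notation bound := (evbound n s1 s2 s3 z).
Local Notation f0 := (C * gauss_lik a S02).
Implicit Types (c m t x : R) (r : R * R * R).

Let S02_gt0 : 0 < S02 := s02_gt0 s1_gt0 s2_gt0 s3_gt0.

Lemma nz2_ge0 : 0 <= a.
Proof. by rewrite mulr_ge0 ?ler0n ?sqr_ge0. Qed.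

Lemma fn_const_gt0 : 0 < C.
Proof. by rewrite sqrtr_gt0 divr_gt0 ?ltr0n ?mulr_gt0 ?pi_gt0. Qed.

Lemma fn0_gt0 : 0 < f0.
Proof. by rewrite mulr_gt0 ?fn_const_gt0 ?gauss_lik_gt0. Qed.

Lemma fnE r : fn n s1 s2 s3 z r = C * gauss_lik a (ssq s1 s2 s3 r).
Proof. exact: esym (mulrA _ _ _). Qed.

Lemma evV_le x : (Sup <= x%:E)%E -> (V <= (x / f0)%:E)%E.
Proof.
move=> Sup_x; rewrite /evV fnE EFinM lee_wpmul2r //.
by rewrite lee_fin invr_ge0 (ltW fn0_gt0).
Qed.

Lemma le_evV x : (x%:E <= Sup)%E -> ((x / f0)%:E <= V)%E.
Proof.
move=> x_Sup; rewrite /evV fnE EFinM lee_wpmul2r //.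
by rewrite lee_fin invr_ge0 (ltW fn0_gt0).
Qed.

Lemma sup_fn_le m : (forall t, 0 < t -> t <= S02 -> gauss_lik a t <= gauss_lik a m) ->
  (Sup <= (C * gauss_lik a m)%:E)%E.
Proof.
move=> le_m; apply: ge_ereal_sup => _ [r Rr <-]; rewrite lee_fin fnE ler_pM2l ?fn_const_gt0 //.
have [r_le0|r_gt0] := leP (ssq s1 s2 s3 r) 0.
  by rewrite gauss_lik_le0 ?gauss_lik_ge0.
by apply: le_m => //; case: Rr => _ _ _ _; rewrite /sfun ler_sqrt // (ltW S02_gt0).
Qed.

Lemma sup_fn_ge_attained t : (exists2 r, Rset s1 s2 s3 r & ssq s1 s2 s3 r = t) ->
  ((C * gauss_lik a t)%:E <= Sup)%E.
Proof. by move=> [r Rr <-]; apply: ereal_sup_ubound; exists r; rewrite ?fnE. Qed.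

(* [T2] itself need not be attained, but values of [ssq] just above it are, and
   there [gauss_lik] is almost as large. *)
Lemma sup_fn_ge c : T2 <= c <= S02 -> 0 < c -> ((C * gauss_lik a c)%:E <= Sup)%E.
Proof.
move=> /andP[T2c]; rewrite le_eqVlt => /predU1P[->|cS02] c_gt0.
  by apply: sup_fn_ge_attained; exists (0, 0, 0); first exact: Rset0.
apply: (lee_of_scaled_lbound (c := c) (b := S02)).
- by rewrite mulr_ge0 ?gauss_lik_ge0 ?(ltW fn_const_gt0).
- by rewrite c_gt0.
move=> t /andP[ct tS02]; apply: le_trans (sup_fn_ge_attained (t := t) _); last first.
  by apply: Rset_ssq_attains; rewrite // tS02 (le_lt_trans T2c ct).
by rewrite lee_fin -mulrA ler_pM2l ?fn_const_gt0 // gauss_lik_scaled_le ?nz2_ge0 // ltW.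
Qed.

Lemma sup_fn_pinfty : a = 0 -> T2 = 0 -> Sup = +oo%E.
Proof.
move=> a0 T2_0; apply: eq_infty => x; set M := `|x| + 1.
have M_gt0 : 0 < M by rewrite ltr_pwDr ?normr_ge0.
have CM_ge0 : 0 <= C / M by rewrite divr_ge0 ?(ltW fn_const_gt0) ?(ltW M_gt0).
set t := Num.min S02 ((C / M) ^+ 2).
have t_gt0 : 0 < t by rewrite lt_min S02_gt0 exprn_gt0 ?divr_gt0 ?fn_const_gt0.
have st_gt0 : 0 < Num.sqrt t by rewrite sqrtr_gt0.
apply: le_trans (sup_fn_ge (c := t) _ t_gt0); last by rewrite T2_0 ltW //= ge_min lexx.
have st_le : Num.sqrt t * M <= C.
  rewrite -ler_pdivlMr // -(ger0_norm CM_ge0) -sqrtr_sqr ler_sqrt ?sqr_ge0 //.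
  by rewrite ge_min lexx orbT.
rewrite lee_fin /gauss_lik a0 oppr0 mul0r expR0 mulr1 -[C * _]/(C / _) ler_pdivlMr //.
by have := ler_norm x; rewrite /M in st_le; nra.
Qed.

Lemma evbound_pos c : 0 < c -> bound c = (C * gauss_lik a c / f0)%:E.
Proof.
move=> c_gt0; rewrite /evbound /ediv gt_eqF ?sqrtr_gt0 // -EFinM.
by rewrite -mulf_div divff ?gt_eqF ?fn_const_gt0 // -gauss_lik_ratio // mul1r.
Qed.

Lemma evbound0 : bound 0 = +oo%E.
Proof. by rewrite /evbound sqrtr0 /ediv eqxx gt0_mulye ?lte_fin ?expR_gt0. Qed.

Lemma evbound_ge1 c : a <= c <= S02 -> (1 <= bound c)%E.
Proof.
move=> /andP[ac cS02]; have [->|c_neq0] := eqVneq c 0; first by rewrite evbound0 leey.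
have c_gt0 : 0 < c by rewrite lt_neqAle eq_sym c_neq0 (le_trans nz2_ge0 ac).
rewrite evbound_pos // lee_fin ler_pdivlMr ?fn0_gt0 // mul1r ler_pM2l ?fn_const_gt0 //.
exact: gauss_lik_antitone.
Qed.

Lemma evV_le_evbound : (V <= bound a)%E.
Proof.
have [a0|a_neq0] := eqVneq a 0; first by rewrite a0 evbound0 leey.
have a_gt0 : 0 < a by rewrite lt_neqAle eq_sym a_neq0 nz2_ge0.
rewrite evbound_pos //; apply/evV_le/sup_fn_le => t t_gt0 _.
exact: gauss_lik_le_max.
Qed.

Lemma evV_le1 : S02 <= a -> (V <= 1)%E.
Proof.
move=> S02a; rewrite -(divff (lt0r_neq0 fn0_gt0)); apply/evV_le/sup_fn_le => t t_gt0 tS02.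
exact: gauss_lik_monotone.
Qed.

Lemma one_le_evV : (1 <= V)%E.
Proof.
rewrite -(divff (lt0r_neq0 fn0_gt0)); apply/le_evV/sup_fn_ge_attained.
by exists (0, 0, 0); first exact: Rset0.
Qed.

(* [bound 0 = +oo] (see [ediv]), which [V] reaches only when [a = 0]. *)
Lemma evbound_le_evV c : T2 <= c <= S02 -> (c = 0 -> a = 0) -> (bound c <= V)%E.
Proof.
move=> /andP[T2c cS02] c0_a0; have [c0|c_neq0] := eqVneq c 0.
  have T2_0 : T2 = 0 by apply/le_anti; rewrite tsL2_ge0 andbT -c0.
  by rewrite /evV fnE (sup_fn_pinfty (c0_a0 c0)) // gt0_mulye ?leey // lte_fin invr_gt0 fn0_gt0.
have c_gt0 : 0 < c by rewrite lt_neqAle eq_sym c_neq0 (le_trans (tsL2_ge0 _ _ _) T2c).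
by rewrite evbound_pos //; apply/le_evV/sup_fn_ge => //; apply/andP.
Qed.

End EvidentialValue.

Theorem theorem1 (R : realType) (n : nat) (s1 s2 s3 z : R) :
  (0 < n)%N -> 0 < s1 -> 0 < s2 -> 0 < s3 ->
  let nz2 := n%:R * z ^+ 2 in
  let S0 := s0 s1 s2 s3 in
  let S02 := s02 s1 s2 s3 in
  let T2 := tsL2 s1 s2 s3 in
  let T := tsL s1 s2 s3 in
  let V := evV n s1 s2 s3 z in
  [/\ sL2 s1 s2 s3 <= T2 /\ T2 <= S02,
      (T2 <= nz2 <= S02 ->
         V = (ediv S0 (Num.sqrt nz2)
               * (expR (- (1 / 2) * nz2 * (nz2^-1 - S02^-1)))%:E)%E
         /\ (1 <= V)%E),
      (nz2 <= T2 ->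
         [/\ ((ediv S0 T * (expR (- (1 / 2) * nz2 * (T2^-1 - S02^-1)))%:E) <= V)%E,
             (1 <= ediv S0 T * (expR (- (1 / 2) * nz2 * (T2^-1 - S02^-1)))%:E)%E
           & (V <= ediv S0 (Num.sqrt nz2)
                   * (expR (- (1 / 2) * nz2 * (nz2^-1 - S02^-1)))%:E)%E])
    & (S02 <= nz2 -> V = 1%E)].
Proof.
move=> n_gt0 s1_gt0 s2_gt0 s3_gt0 nz2 S0 S02 T2 T V.
have V_le : (V <= evbound n s1 s2 s3 z nz2)%E by apply: evV_le_evbound.
have le_V := evbound_le_evV n_gt0 s1_gt0 s2_gt0 s3_gt0.
have one_le_V : (1 <= V)%E by apply: one_le_evV.
have T2_S02 : T2 <= S02 by apply: tsL2_le_s02.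
split.
- by split; first apply: sL2_le_tsL2.
- move=> /andP[T2_nz2 nz2_S02]; split => //.
  by apply/le_anti; rewrite V_le le_V ?T2_nz2.
- move=> nz2_T2; split => //.
  + apply: le_V => [|T2_0]; first by rewrite lexx.
    by apply/le_anti; rewrite -{1}T2_0 nz2_T2; apply: nz2_ge0.
  + by apply: evbound_ge1; rewrite ?nz2_T2.
- by move=> S02_nz2; apply/le_anti; rewrite one_le_V andbT; apply: evV_le1.
Qed.
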